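(* Let $\mathbf{P}$ be a poset and let $\mathcal{A},\mathcal{B},\mathcal{C}$ be $\mathbf{P}$-indexed barcodes. Let $M:\mathcal{A}\nrightarrow\mathcal{B}$ and $N:\mathcal{B}\nrightarrow\mathcal{C}$ be overlap matchings, and let $(\alpha,\gamma)\in N\circ M$, where \[N\circ M=\{(\alpha,\gamma)\in \mathrm{Rep}(\mathcal{A})\times\mathrm{Rep}(\mathcal{C}) : \exists\,\beta\ \text{with}\ (\alpha,\beta)\in M,\ (\beta,\gamma)\in N,\ \text{and}\ \mathcal{A}(\alpha)\cap\mathcal{C}(\gamma)\neq\emptyset\}.\] Then there exists $\beta\in\mathrm{Rep}(\mathcal{B})$ with $(\alpha,\beta)\in M$ and $(\beta,\gamma)\in N$ such that \[\mathcal{A}(\alpha)\cap\mathcal{C}(\gamma)\subseteq\mathcal{B}(\beta).\]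
   Context: A subset $S$ of a poset $\mathbf{P}$ is convex if $b,c\in S$ and $b\le t\le c$ imply $t\in S$. An interval in $\mathbf{P}$ is a nonempty convex subset that is connected as a full subcategory (i.e. any two elements are joined by a finite zigzag of comparable elements within it). Let $\mathcal{I}_{\mathbf{P}}$ be the set of intervals. A $\mathbf{P}$-indexed barcode is a function $\mathcal{B}:\mathrm{Rep}(\mathcal{B})\to\mathcal{I}_{\mathbf{P}}$ from a set $\mathrm{Rep}(\mathcal{B})$ of ''bars''. A matching $M:A\nrightarrow B$ between sets is a relation $M\subseteq A\times B$ such that each $a$ is related to at most one $b$ and each $b$ to at most one $a$. A barcode matching $M:\mathcal{A}\nrightarrow\mathcal{B}$ is a matching $M\subseteq\mathrm{Rep}(\mathcal{A})\times\mathrm{Rep}(\mathcal{B})$ with $\mathcal{A}(\alpha)\cap\mathcal{B}(\beta)\neq\emptyset$ for all $(\alpha,\beta)\in M$. For intervals $I,J$: $J$ bounds $I$ below if there is $a\in J$ with $a\le t$ for all $t\in I$; $I$ bounds $J$ above if there is $d\in I$ with $t\le d$ for all $t\in J$. $I$ overlaps $J$ above if $I\cap J\neq\emptyset$, $J$ bounds $I$ below, and $I$ bounds $J$ above. A barcode matching $M$ is an overlap matching if $\mathcal{A}(\alpha)$ overlaps $\mathcal{B}(\beta)$ above for all $(\alpha,\beta)\in M$. *)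

From Stdlib Require Import Relations.

Record Poset := {
  carrier :> Type;
  le : carrier -> carrier -> Prop;
  le_refl : forall x, le x x;
  le_antisym : forall x y, le x y -> le y x -> x = y;
  le_trans : forall x y z, le x y -> le y z -> le x z
}.

Arguments le {p} _ _.

Section Defs.
Variable P : Poset.

Definition convex (S : P -> Prop) : Prop :=
  forall b c t, S b -> S c -> le b t -> le t c -> S t.

Definition comp_in (S : P -> Prop) (x y : P) : Prop :=
  S x /\ S y /\ (le x y \/ le y x).

(* S is connected as a full subcategory: any two elements are joined by a
   finite zigzag of comparable elements within S *)
Definition connected (S : P -> Prop) : Prop :=
  forall x y, S x -> S y -> clos_refl_trans P (comp_in S) x y.

Definition is_interval (S : P -> Prop) : Prop :=
  (exists x, S x) /\ convex S /\ connected S.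

Definition bounds_below (J I : P -> Prop) : Prop :=
  exists a, J a /\ forall t, I t -> le a t.

Definition bounds_above (I J : P -> Prop) : Prop :=
  exists d, I d /\ forall t, J t -> le t d.

Definition meets (I J : P -> Prop) : Prop := exists t, I t /\ J t.

Definition overlaps_above (I J : P -> Prop) : Prop :=
  meets I J /\ bounds_below J I /\ bounds_above I J.

End Defs.

Arguments convex {P} S.
Arguments connected {P} S.
Arguments is_interval {P} S.
Arguments bounds_below {P} J I.
Arguments bounds_above {P} I J.
Arguments meets {P} I J.
Arguments overlaps_above {P} I J.

Record Barcode (P : Poset) := {
  Rep : Type;
  bar : Rep -> P -> Prop;
  bar_interval : forall r, is_interval (bar r)
}.

Arguments Rep {P} b.
Arguments bar {P} b _ _.

Definition matching {X Y : Type} (M : X -> Y -> Prop) : Prop :=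
  (forall a b b', M a b -> M a b' -> b = b') /\
  (forall a a' b, M a b -> M a' b -> a = a').

Definition barcode_matching {P : Poset} (A B : Barcode P)
  (M : Rep A -> Rep B -> Prop) : Prop :=
  matching M /\ forall a b, M a b -> meets (bar A a) (bar B b).

Definition overlap_matching {P : Poset} (A B : Barcode P)
  (M : Rep A -> Rep B -> Prop) : Prop :=
  barcode_matching A B M /\
  forall a b, M a b -> overlaps_above (bar A a) (bar B b).

Definition comp_matching {P : Poset} (A B C : Barcode P)
  (M : Rep A -> Rep B -> Prop) (N : Rep B -> Rep C -> Prop)
  (a : Rep A) (c : Rep C) : Prop :=
  exists b, M a b /\ N b c /\ meets (bar A a) (bar C c).


Lemma convex_between_bounds (P : Poset) (S I J : P -> Prop) :
  convex S -> bounds_below S I -> bounds_above S J ->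
  forall t, I t -> J t -> S t.
Proof.
  intros Sconv [lo [Slo lo_le]] [hi [Shi le_hi]] t It Jt.
  exact (Sconv lo hi t Slo Shi (lo_le t It) (le_hi t Jt)).
Qed.

Lemma bar_convex (P : Poset) (B : Barcode P) (b : Rep B) : convex (bar B b).
Proof. destruct (bar_interval P B b) as [_ [Bconv _]]; exact Bconv. Qed.

Theorem lemma2p3 (P : Poset) (A B C : Barcode P)
  (M : Rep A -> Rep B -> Prop) (N : Rep B -> Rep C -> Prop)
  (HM : overlap_matching A B M) (HN : overlap_matching B C N)
  (a : Rep A) (c : Rep C) (Hac : comp_matching A B C M N a c) :
  exists b : Rep B, M a b /\ N b c /\
    (forall t : P, bar A a t -> bar C c t -> bar B b t).
Proof.
  destruct Hac as [b [Mab [Nbc _]]].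
  exists b; split; [exact Mab | split; [exact Nbc |]].
  destruct HM as [_ overlapM]; destruct HN as [_ overlapN].
  destruct (overlapM a b Mab) as [_ [below_a _]].
  destruct (overlapN b c Nbc) as [_ [_ above_c]].
  exact (convex_between_bounds P _ _ _ (bar_convex P B b) below_a above_c).
Qed.
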